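(* Let $q\ge 3$. The following hold. (1) If $\mathbf u\in\mathbb R^2$ is such that the orbit $G_q\mathbf u=\{A\mathbf u: A\in G_q\}$ is a discrete subset of $\mathbb R^2$, then either $\mathbf u=(0,0)^T$ or there is a nonzero $\alpha\in\mathbb R$ with $G_q\mathbf u=\alpha\Lambda_q$. (2) No element $\mathbf v\in\Lambda_q$ satisfies $Q_q(\mathbf v)<1$, where $Q_q((x,y)^T)=x^2-\lambda_q xy+y^2$; i.e. the open interior of the ellipse $Q_q=1$ contains no element of $\Lambda_q$. (3) $\mathfrak w_i^q\wedge\mathfrak w_{i+1}^q=1$ for $i=0,1,\dots,q-2$, and $\mathfrak w_0^q\wedge\mathfrak w_{q-1}^q=1$. (4) If $\mathbf u_0,\mathbf u_1\in\Lambda_q$ satisfy $\mathbf u_0\wedge\mathbf u_1=1$, then there exists $A\in G_q$ with $A\mathbf u_0=(1,0)^T$ and $A\mathbf u_1=(0,1)^T$; equivalently, the matrix with columns $\mathbf u_0,\mathbf u_1$ belongs to $G_q$. Thus unimodular pairs of elements of $\Lambda_q$ are exactly the column pairs of matrices in $G_q$.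
   Context: Fix an integer $q\ge3$, let $\lambda_q=2\cos(\pi/q)$, and let $G_q\subset \mathrm{SL}(2,\mathbb R)$ be the Hecke triangle group generated by $S=\begin{pmatrix}0&-1\\1&0\end{pmatrix}$ and $T_q=\begin{pmatrix}1&\lambda_q\\0&1\end{pmatrix}$, acting linearly on $\mathbb R^2$ (column vectors). Set $\Lambda_q=G_q(1,0)^T=\{A(1,0)^T:A\in G_q\}$. Let $U_q=T_qS=\begin{pmatrix}\lambda_q&-1\\1&0\end{pmatrix}$ and $\mathfrak w_i^q=(x_i^q,y_i^q)^T=U_q^i(1,0)^T$ for $i=0,1,\dots,2q-1$ (so $\mathfrak w_0^q=(1,0)^T$, $\mathfrak w_1^q=(\lambda_q,1)^T$, $\mathfrak w_{q-1}^q=(0,1)^T$). For $\mathbf u_0=(x_0,y_0)^T,\mathbf u_1=(x_1,y_1)^T$, the wedge product is $\mathbf u_0\wedge\mathbf u_1=x_0y_1-x_1y_0$; the pair is called unimodular if $\mathbf u_0\wedge\mathbf u_1=1$. *)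

From Stdlib Require Import Reals Lra Lia.
Open Scope R_scope.

Definition lam (q : nat) : R := 2 * cos (PI / INR q).

Record mat2 : Type := Mat2 { m11 : R; m12 : R; m21 : R; m22 : R }.
Definition vec2 : Type := (R * R)%type.

Definition mmul (A B : mat2) : mat2 :=
  Mat2 (m11 A * m11 B + m12 A * m21 B) (m11 A * m12 B + m12 A * m22 B)
       (m21 A * m11 B + m22 A * m21 B) (m21 A * m12 B + m22 A * m22 B).

Definition mapply (A : mat2) (v : vec2) : vec2 :=
  (m11 A * fst v + m12 A * snd v, m21 A * fst v + m22 A * snd v).

Definition mid : mat2 := Mat2 1 0 0 1.
Definition matS : mat2 := Mat2 0 (-1) 1 0.
Definition matSinv : mat2 := Mat2 0 1 (-1) 0.
Definition matT (q : nat) : mat2 := Mat2 1 (lam q) 0 1.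
Definition matTinv (q : nat) : mat2 := Mat2 1 (- lam q) 0 1.

Definition cols (u0 u1 : vec2) : mat2 := Mat2 (fst u0) (fst u1) (snd u0) (snd u1).

Inductive Gq (q : nat) : mat2 -> Prop :=
| Gq_id : Gq q mid
| Gq_S : forall A, Gq q A -> Gq q (mmul matS A)
| Gq_Sinv : forall A, Gq q A -> Gq q (mmul matSinv A)
| Gq_T : forall A, Gq q A -> Gq q (mmul (matT q) A)
| Gq_Tinv : forall A, Gq q A -> Gq q (mmul (matTinv q) A).

Definition orbit (q : nat) (u : vec2) (v : vec2) : Prop :=
  exists A, Gq q A /\ v = mapply A u.

Definition Lambda (q : nat) (v : vec2) : Prop := orbit q (1, 0) v.

Definition discrete (P : vec2 -> Prop) : Prop :=
  forall v, P v -> exists eps, 0 < eps /\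
    forall w, P w ->
      (fst w - fst v) ^ 2 + (snd w - snd v) ^ 2 < eps ^ 2 -> w = v.

Definition scale (a : R) (v : vec2) : vec2 := (a * fst v, a * snd v).

Definition Qq (q : nat) (v : vec2) : R :=
  fst v ^ 2 - lam q * fst v * snd v + snd v ^ 2.

Definition wedge (u0 u1 : vec2) : R := fst u0 * snd u1 - fst u1 * snd u0.

Definition matU (q : nat) : mat2 := mmul (matT q) matS.
Fixpoint mpow (A : mat2) (n : nat) : mat2 :=
  match n with O => mid | S k => mmul A (mpow A k) end.
Definition w (q i : nat) : vec2 := mapply (mpow (matU q) i) (1, 0).

From Stdlib Require Import Reals Lra Lia ZArith Classical.
Open Scope R_scope.

(* U_q = T_q S preserves Q_q(x, y) = x^2 - lambda_q x y + y^2, and U_q^q = -1. The matrix U_q^k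
   (1 <= k <= q-1) has entries +-c_j with c_j = sin(j pi/q) / sin(pi/q) >= 0, so it maps the
   quadrants {xy <= 0} into {xy >= 0}, while S changes Q_q by 2 lambda_q x y. Hence the vectors
   U_q^(k_n) S ... U_q^(k_1) S U_q^(k_0) (1,0) with 1 <= k_i <= q-1 lie in {xy >= 0} and satisfy
   Q_q >= 1; together with their images under powers of S they form a G_q-invariant set
   containing Lambda_q, which gives (2). The vectors w_i are (c_(i+1), c_i), and (3) is the
   Cassini identity for c.
   For (4), move u_0 to (1,0); then u_1 becomes (x, 1), which a power of T_q brings to
   |x| <= lambda_q/2, and Q_q >= 1 at (x, 1) and at S (x, 1) forces x = 0.
   For (1), the Euclidean algorithm (translate by T_q^k to |x| <= lambda_q |y| / 2, then apply S)
   either reaches the x-axis, and then the orbit is a multiple of Lambda_q, or produces orbit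
   points arbitrarily close to 0 off the axis. In the second case the orbit is dense: if A p is
   small, p is a small combination of the two columns of A^-1, which lie in Lambda_q, so p is
   close to the line of one of them; and translates of a small orbit vector by powers of T_q,
   mapped onto that line, approximate p. A dense orbit is not discrete. *)

Definition norm2 (v : vec2) : R := fst v ^ 2 + snd v ^ 2.
Definition dist2 (v w : vec2) : R := (fst w - fst v) ^ 2 + (snd w - snd v) ^ 2.

Definition det (A : mat2) : R := m11 A * m22 A - m12 A * m21 A.
Definition madj (A : mat2) : mat2 := Mat2 (m22 A) (- m12 A) (- m21 A) (m11 A).
Definition frob2 (A : mat2) : R := m11 A ^ 2 + m12 A ^ 2 + m21 A ^ 2 + m22 A ^ 2.

Lemma nearest_int t : exists k : Z, Rabs (t - IZR k) <= 1 / 2.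
Proof.
  destruct (archimed t) as [Hup1 Hup2].
  destruct (Rle_dec (t - IZR (up t - 1)) (1 / 2)).
  - exists (up t - 1)%Z. rewrite minus_IZR in *. rewrite Rabs_right by lra. lra.
  - exists (up t). rewrite minus_IZR in n. rewrite Rabs_left by lra. lra.
Qed.

Lemma translate_close l x y t : 0 < l -> y <> 0 ->
  exists k : Z, Rabs (x + IZR k * l * y - t) <= l / 2 * Rabs y.
Proof.
  intros Hl Hy. destruct (nearest_int ((t - x) / (l * y))) as [k Hk].
  exists k.
  replace (x + IZR k * l * y - t) with (- (l * y) * ((t - x) / (l * y) - IZR k))
    by (field; split; lra).
  rewrite Rabs_mult, Rabs_Ropp, Rabs_mult, (Rabs_right l) by lra.
  assert (0 <= l * Rabs y) by (pose proof (Rabs_pos y); nra).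
  replace (l / 2 * Rabs y) with (l * Rabs y * (1 / 2)) by field.
  apply Rmult_le_compat_l; assumption.
Qed.

Lemma sq_lt_of_abs_lt a e : Rabs a < e -> e <= 1 -> a ^ 2 < e.
Proof.
  intros Ha He. rewrite <- pow2_abs. pose proof (Rabs_pos a).
  apply Rlt_le_trans with (e * e); [simpl; nra | nra].
Qed.

Lemma four_mul_sq_lt a b d : a ^ 2 + b ^ 2 < d -> d <= 1 -> 4 * a ^ 2 * b ^ 2 < d.
Proof.
  intros Hab Hd. pose proof (pow2_ge_0 a). pose proof (pow2_ge_0 b).
  pose proof (pow2_ge_0 (a ^ 2 - b ^ 2)).
  assert (Hs : (a ^ 2 + b ^ 2) ^ 2 < d) by (apply sq_lt_of_abs_lt; [rewrite Rabs_right|]; lra).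
  nra.
Qed.

Lemma dist2_le_2 p s v : dist2 p v <= 2 * dist2 p s + 2 * dist2 s v.
Proof.
  unfold dist2.
  pose proof (pow2_ge_0 (fst p + fst v - 2 * fst s)).
  pose proof (pow2_ge_0 (snd p + snd v - 2 * snd s)). nra.
Qed.

Lemma mapply_mmul A B v : mapply (mmul A B) v = mapply A (mapply B v).
Proof. destruct A, B, v; unfold mapply, mmul; simpl; f_equal; ring. Qed.

Lemma mmul_assoc A B C : mmul (mmul A B) C = mmul A (mmul B C).
Proof. destruct A, B, C; unfold mmul; simpl; f_equal; ring. Qed.

Lemma mmul_mid_l A : mmul mid A = A.
Proof. destruct A; unfold mmul, mid; simpl; f_equal; ring. Qed.

Lemma mmul_mid_r A : mmul A mid = A.
Proof. destruct A; unfold mmul, mid; simpl; f_equal; ring. Qed.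

Lemma mapply_mid v : mapply mid v = v.
Proof. destruct v; unfold mapply, mid; simpl; f_equal; ring. Qed.

Lemma det_mmul A B : det (mmul A B) = det A * det B.
Proof. destruct A, B; unfold det, mmul; simpl; ring. Qed.

Lemma det_madj A : det (madj A) = det A.
Proof. destruct A; unfold det, madj; simpl; ring. Qed.

Lemma madj_mmul A B : madj (mmul A B) = mmul (madj B) (madj A).
Proof. destruct A, B; unfold madj, mmul; simpl; f_equal; ring. Qed.

Lemma mapply_madj_l A v : det A = 1 -> mapply (madj A) (mapply A v) = v.
Proof.
  destruct A as [a b c d], v as [x y]; unfold det, mapply, madj; simpl; intro H.
  f_equal; [transitivity ((a * d - b * c) * x) | transitivity ((a * d - b * c) * y)];
    solve [ring | rewrite H; ring].
Qed.

Lemma mapply_axis A a : mapply A (a, 0) = scale a (mapply A (1, 0)).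
Proof. destruct A; unfold mapply, scale; simpl; f_equal; ring. Qed.

Lemma mapply_zero A : mapply A (0, 0) = (0, 0).
Proof. destruct A; unfold mapply; simpl; f_equal; ring. Qed.

Lemma wedge_mapply A u v : wedge (mapply A u) (mapply A v) = det A * wedge u v.
Proof. destruct A, u, v; unfold wedge, mapply, det; simpl; ring. Qed.

Lemma cols_columns A : cols (mapply A (1, 0)) (mapply A (0, 1)) = A.
Proof. destruct A; unfold cols, mapply; simpl; f_equal; ring. Qed.

Lemma dist2_mapply_le A u v : dist2 (mapply A u) (mapply A v) <= frob2 A * dist2 u v.
Proof.
  destruct A as [a b c d], u as [x1 y1], v as [x2 y2].
  unfold dist2, frob2, mapply; simpl.
  pose proof (pow2_ge_0 (a * (y2 - y1) - b * (x2 - x1))).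
  pose proof (pow2_ge_0 (c * (y2 - y1) - d * (x2 - x1))). nra.
Qed.

Lemma norm2_ge_0 v : 0 <= norm2 v.
Proof. apply Rplus_le_le_0_compat; apply pow2_ge_0. Qed.

Lemma dist2_ge_0 v w : 0 <= dist2 v w.
Proof. apply Rplus_le_le_0_compat; apply pow2_ge_0. Qed.

(* [t c] is the orthogonal projection of [p] onto the line [R c]. *)
Lemma dist2_line c p : 0 < norm2 c ->
  exists t, dist2 p (scale t c) * norm2 c = wedge c p ^ 2.
Proof.
  unfold norm2, dist2, wedge, scale. destruct c as [a b], p as [x y]; simpl. intro Hc.
  exists ((a * x + b * y) / (a ^ 2 + b ^ 2)). field. lra.
Qed.

Lemma wedge_sq_le u v : wedge u v ^ 2 <= norm2 u * norm2 v.
Proof.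
  unfold wedge, norm2. pose proof (pow2_ge_0 (fst u * fst v + snd u * snd v)). nra.
Qed.

(* Write p = a c1 + b c2. One of a c1, b c2 has norm at least |p|/2, and the distance from p
   to the line of that column is |b|/|c1|, resp. |a|/|c2|, hence at most 2|ab|/|p|. *)
Lemma near_column_line c1 c2 a b : wedge c1 c2 = 1 ->
  exists c t, (c = c1 \/ c = c2) /\
    dist2 (mapply (cols c1 c2) (a, b)) (scale t c) * norm2 (mapply (cols c1 c2) (a, b))
      <= 4 * a ^ 2 * b ^ 2.
Proof.
  intro Hw. set (p := mapply (cols c1 c2) (a, b)).
  assert (Hn : 0 < norm2 c1 /\ 0 < norm2 c2).
  { pose proof (wedge_sq_le c1 c2) as Hl. rewrite Hw in Hl.
    pose proof (norm2_ge_0 c1). pose proof (norm2_ge_0 c2). split; nra. }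
  assert (Hp : norm2 p <= 2 * (a ^ 2 * norm2 c1 + b ^ 2 * norm2 c2)).
  { unfold p, norm2, cols, mapply; simpl.
    pose proof (pow2_ge_0 (a * fst c1 - b * fst c2)).
    pose proof (pow2_ge_0 (a * snd c1 - b * snd c2)). nra. }
  pose proof (pow2_ge_0 a). pose proof (pow2_ge_0 b).
  destruct (Rle_dec (norm2 p) (4 * a ^ 2 * norm2 c1)) as [H1 | H1].
  - destruct (dist2_line c1 p) as [t Ht]; [apply Hn|].
    exists c1, t. split; [auto|].
    assert (E : wedge c1 p = b) by (rewrite <- (Rmult_1_l b), <- Hw;
      unfold p, wedge, cols, mapply; simpl; ring).
    rewrite E in Ht. pose proof (dist2_ge_0 p (scale t c1)).
    apply Rle_trans with (dist2 p (scale t c1) * (4 * a ^ 2 * norm2 c1));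
      [apply Rmult_le_compat_l; lra | nra].
  - destruct (dist2_line c2 p) as [t Ht]; [apply Hn|].
    exists c2, t. split; [auto|].
    assert (E : wedge c2 p = - a) by (rewrite <- (Rmult_1_l a), <- Hw;
      unfold p, wedge, cols, mapply; simpl; ring).
    rewrite E in Ht. pose proof (dist2_ge_0 p (scale t c2)).
    apply Rle_trans with (dist2 p (scale t c2) * (4 * b ^ 2 * norm2 c2));
      [apply Rmult_le_compat_l; lra | nra].
Qed.

(* [cheb l n] is the Chebyshev polynomial U_(n-1) evaluated at l/2. *)
Fixpoint cheb (l : R) (n : nat) : R :=
  match n with
  | O => 0
  | S O => 1
  | S ((S k) as m) => l * cheb l m - cheb l k
  end.

Lemma cheb_SS l n : cheb l (S (S n)) = l * cheb l (S n) - cheb l n.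
Proof. reflexivity. Qed.

Lemma cheb_cassini l n : cheb l (S n) ^ 2 - cheb l (S (S n)) * cheb l n = 1.
Proof.
  induction n as [|n IH]; [simpl; ring|].
  rewrite <- IH, !cheb_SS. ring.
Qed.

Lemma cheb_sin t n : cheb (2 * cos t) n * sin t = sin (INR n * t).
Proof.
  enough (H : cheb (2 * cos t) n * sin t = sin (INR n * t) /\
              cheb (2 * cos t) (S n) * sin t = sin (INR (S n) * t)) by apply H.
  induction n as [|n [IH1 IH2]].
  - simpl. rewrite !Rmult_0_l, !Rmult_1_l, sin_0. split; reflexivity.
  - split; [exact IH2|]. rewrite cheb_SS.
    replace (INR (S (S n)) * t) with (INR (S n) * t + t) by (rewrite (S_INR (S n)); ring).
    replace (INR n * t) with (INR (S n) * t - t) in IH1 by (rewrite S_INR; ring).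
    rewrite sin_plus. rewrite sin_minus in IH1.
    transitivity (2 * cos t * (cheb (2 * cos t) (S n) * sin t) - cheb (2 * cos t) n * sin t);
      [ring | rewrite IH1, IH2; ring].
Qed.

(* The actions of S and of U = T S (with lambda = l) on column vectors. *)
Definition Sv (v : vec2) : vec2 := (- snd v, fst v).
Definition Uv (l : R) (v : vec2) : vec2 := (l * fst v - snd v, fst v).
Definition iterU (l : R) (n : nat) (v : vec2) : vec2 := Nat.iter n (Uv l) v.

Lemma iterU_S l n x y : iterU l (S n) (x, y) =
  (cheb l (S (S n)) * x - cheb l (S n) * y, cheb l (S n) * x - cheb l n * y).
Proof.
  induction n as [|n IH].
  - unfold iterU, Uv; simpl. f_equal; ring.
  - change (iterU l (S (S n)) (x, y)) with (Uv l (iterU l (S n) (x, y))).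
    rewrite IH. unfold Uv; cbn [fst snd]. rewrite (cheb_SS l (S n)), (cheb_SS l n).
    f_equal; ring.
Qed.

Lemma iterU_e1 l n : iterU l n (1, 0) = (cheb l (S n), cheb l n).
Proof.
  destruct n as [|n]; [reflexivity|].
  rewrite iterU_S. f_equal; ring.
Qed.

Lemma Uv_Sv_Sv l v : Uv l (Sv (Sv v)) = Sv (Sv (Uv l v)).
Proof. destruct v; unfold Uv, Sv; simpl; f_equal; ring. Qed.

Section Hecke.

Variable q : nat.
Hypothesis hq : (3 <= q)%nat.

Let th := PI / INR q.

Lemma INR_q_ge_3 : 3 <= INR q.
Proof. replace 3 with (INR 3) by (simpl; ring). apply le_INR; lia. Qed.

Lemma th_bounds : 0 < th <= PI / 3.
Proof.
  pose proof INR_q_ge_3. pose proof PI_RGT_0. unfold th. split.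
  - apply Rdiv_lt_0_compat; lra.
  - apply Rmult_le_compat_l; [lra|]. apply Rinv_le_contravar; lra.
Qed.

Lemma lam_bounds : 0 < lam q < 2.
Proof.
  unfold lam. fold th. pose proof th_bounds. pose proof PI_RGT_0.
  assert (0 < cos th) by (apply cos_gt_0; lra).
  assert (cos th < cos 0) by (apply cos_decreasing_1; lra).
  rewrite cos_0 in *. lra.
Qed.

Lemma cheb_lam_sin n : cheb (lam q) n * sin th = sin (INR n * th).
Proof. apply cheb_sin. Qed.

Lemma sin_th_pos : 0 < sin th.
Proof. pose proof th_bounds. pose proof PI_RGT_0. apply sin_gt_0; lra. Qed.

Lemma cheb_lam_ge_0 n : (n <= q)%nat -> 0 <= cheb (lam q) n.
Proof.
  intro Hn. pose proof sin_th_pos. pose proof (cheb_lam_sin n) as Hs.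
  assert (0 <= sin (INR n * th)); [|nra].
  pose proof th_bounds. pose proof INR_q_ge_3. pose proof PI_RGT_0.
  apply le_INR in Hn. apply sin_ge_0.
  - pose proof (pos_INR n). nra.
  - apply Rle_trans with (INR q * th); [apply Rmult_le_compat_r; lra|].
    right. unfold th. field. lra.
Qed.

Lemma cheb_lam_q : cheb (lam q) q = 0.
Proof.
  pose proof sin_th_pos. pose proof INR_q_ge_3. pose proof (cheb_lam_sin q) as Hs.
  replace (INR q * th) with PI in Hs by (unfold th; field; lra).
  rewrite sin_PI in Hs. nra.
Qed.

Lemma cheb_lam_pred_q : cheb (lam q) (q - 1) = 1.
Proof.
  pose proof sin_th_pos. pose proof INR_q_ge_3. pose proof (cheb_lam_sin (q - 1)) as Hs.
  replace (INR (q - 1) * th) with (PI - th) in Hs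
    by (rewrite minus_INR by lia; unfold th; simpl; field; lra).
  rewrite sin_PI_x in Hs. nra.
Qed.

Lemma cheb_lam_succ_q : cheb (lam q) (S q) = -1.
Proof.
  replace (S q) with (S (S (S (q - 2)))) by lia. rewrite cheb_SS.
  replace (S (S (q - 2))) with q by lia. replace (S (q - 2)) with (q - 1)%nat by lia.
  rewrite cheb_lam_q, cheb_lam_pred_q. ring.
Qed.

(* As [Sv (Sv v) = -v], this says U_q^q = -1. *)
Lemma iterU_lam_q v : iterU (lam q) q v = Sv (Sv v).
Proof.
  destruct v as [x y].
  replace (iterU (lam q) q (x, y)) with (iterU (lam q) (S (q - 1)) (x, y)) by (f_equal; lia).
  rewrite iterU_S. replace (S (S (q - 1))) with (S q) by lia.
  replace (S (q - 1)) with q by lia.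
  rewrite cheb_lam_succ_q, cheb_lam_q, cheb_lam_pred_q. unfold Sv; simpl. f_equal; ring.
Qed.

(* T_q^-1 = S U_q^-1 = S^3 U_q^(q-1). *)
Lemma mapply_matTinv v : mapply (matTinv q) v = Sv (Sv (Sv (iterU (lam q) (q - 1) v))).
Proof.
  assert (H : Uv (lam q) (iterU (lam q) (q - 1) v) = Sv (Sv v)).
  { rewrite <- iterU_lam_q.
    replace (iterU (lam q) q v) with (iterU (lam q) (S (q - 1)) v) by (f_equal; lia).
    reflexivity. }
  destruct (iterU (lam q) (q - 1) v) as [a b], v as [x y].
  unfold Uv, Sv in H; simpl in H. injection H as H1 H2.
  unfold mapply, matTinv, Sv; simpl. subst a. f_equal; lra.
Qed.

Lemma Gq_mul A B : Gq q A -> Gq q B -> Gq q (mmul A B).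
Proof.
  intros HA HB. induction HA; [rewrite mmul_mid_l; exact HB|..];
    rewrite mmul_assoc; constructor; assumption.
Qed.

Lemma Gq_matS : Gq q matS.
Proof. rewrite <- (mmul_mid_r matS). do 2 constructor. Qed.

Lemma Gq_matSinv : Gq q matSinv.
Proof. rewrite <- (mmul_mid_r matSinv). do 2 constructor. Qed.

Lemma Gq_matT : Gq q (matT q).
Proof. rewrite <- (mmul_mid_r (matT q)). do 2 constructor. Qed.

Lemma Gq_matTinv : Gq q (matTinv q).
Proof. rewrite <- (mmul_mid_r (matTinv q)). do 2 constructor. Qed.

Lemma Gq_det A : Gq q A -> det A = 1.
Proof.
  induction 1; try (rewrite det_mmul, IHGq; unfold det; simpl; ring).
  unfold det, mid; simpl; ring.
Qed.

Lemma Gq_madj A : Gq q A -> Gq q (madj A).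
Proof.
  induction 1; rewrite ?madj_mmul.
  - replace (madj mid) with mid by (unfold madj, mid; simpl; f_equal; ring). constructor.
  - apply Gq_mul; [exact IHGq|].
    replace (madj matS) with matSinv by (unfold madj, matS, matSinv; simpl; f_equal; ring).
    apply Gq_matSinv.
  - apply Gq_mul; [exact IHGq|].
    replace (madj matSinv) with matS by (unfold madj, matS, matSinv; simpl; f_equal; ring).
    apply Gq_matS.
  - apply Gq_mul; [exact IHGq|].
    replace (madj (matT q)) with (matTinv q)
      by (unfold madj, matT, matTinv; simpl; f_equal; ring).
    apply Gq_matTinv.
  - apply Gq_mul; [exact IHGq|].
    replace (madj (matTinv q)) with (matT q)
      by (unfold madj, matT, matTinv; simpl; f_equal; ring).
    apply Gq_matT.
Qed.

Definition matTz (k : Z) : mat2 := Mat2 1 (IZR k * lam q) 0 1.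

Lemma Gq_matTz k : Gq q (matTz k).
Proof.
  induction k using Z.peano_ind.
  - replace (matTz 0) with mid by (unfold matTz, mid; f_equal; ring). constructor.
  - replace (matTz (Z.succ k)) with (mmul (matT q) (matTz k)); [constructor; auto|].
    unfold matTz, mmul, matT; simpl. rewrite succ_IZR. f_equal; ring.
  - replace (matTz (Z.pred k)) with (mmul (matTinv q) (matTz k)); [constructor; auto|].
    unfold matTz, mmul, matTinv; simpl. rewrite <- Z.sub_1_r, minus_IZR. f_equal; ring.
Qed.

Lemma mapply_matTz k x y : mapply (matTz k) (x, y) = (x + IZR k * lam q * y, y).
Proof. unfold mapply, matTz; simpl. f_equal; ring. Qed.

Lemma orbit_refl u : orbit q u u.
Proof. exists mid. split; [constructor | symmetry; apply mapply_mid]. Qed.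

Lemma orbit_act B u v : Gq q B -> orbit q u v -> orbit q u (mapply B v).
Proof.
  intros HB [A [HA ->]]. exists (mmul B A).
  split; [apply Gq_mul; assumption | symmetry; apply mapply_mmul].
Qed.

Lemma orbit_trans u v x : orbit q u v -> orbit q v x -> orbit q u x.
Proof. intros Huv [B [HB ->]]. apply orbit_act; assumption. Qed.

Lemma orbit_sym u v : orbit q u v -> orbit q v u.
Proof.
  intros [A [HA ->]]. exists (madj A).
  split; [apply Gq_madj; assumption | symmetry; apply mapply_madj_l, Gq_det, HA].
Qed.

Lemma orbit_axis a v : orbit q (a, 0) v <-> exists z, Lambda q z /\ v = scale a z.
Proof.
  split.
  - intros [A [HA ->]]. exists (mapply A (1, 0)).
    split; [exists A; auto | apply mapply_axis].
  - intros [z [[A [HA ->]] ->]]. exists A. split; [assumption | symmetry; apply mapply_axis].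
Qed.

Lemma Qq_Uv v : Qq q (Uv (lam q) v) = Qq q v.
Proof. destruct v as [x y]; unfold Qq, Uv; simpl. ring. Qed.

Lemma Qq_iterU n v : Qq q (iterU (lam q) n v) = Qq q v.
Proof.
  induction n as [|n IH]; [reflexivity|].
  change (iterU (lam q) (S n) v) with (Uv (lam q) (iterU (lam q) n v)). rewrite Qq_Uv; exact IH.
Qed.

Lemma Qq_Sv v : Qq q (Sv v) = Qq q v + 2 * lam q * fst v * snd v.
Proof. destruct v as [x y]; unfold Qq, Sv; simpl. ring. Qed.

Lemma iterU_quadrant k v : (1 <= k <= q - 1)%nat -> fst v * snd v <= 0 ->
  0 <= fst (iterU (lam q) k v) * snd (iterU (lam q) k v).
Proof.
  intros Hk Hv. destruct k as [|m]; [lia|]. destruct v as [x y]. rewrite iterU_S.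
  cbn [fst snd] in *.
  pose proof (cheb_lam_ge_0 (S (S m)) ltac:(lia)).
  pose proof (cheb_lam_ge_0 (S m) ltac:(lia)).
  pose proof (cheb_lam_ge_0 m ltac:(lia)).
  set (a := cheb (lam q) (S (S m))) in *. set (b := cheb (lam q) (S m)) in *.
  set (c := cheb (lam q) m) in *.
  assert (0 <= a * b * x ^ 2) by (pose proof (pow2_ge_0 x); apply Rmult_le_pos; nra).
  assert (0 <= b * c * y ^ 2) by (pose proof (pow2_ge_0 y); apply Rmult_le_pos; nra).
  assert (0 <= (a * c + b * b) * - (x * y)) by (apply Rmult_le_pos; nra).
  nra.
Qed.

Inductive tree : vec2 -> Prop :=
| tree_root k : (k <= q - 1)%nat -> tree (iterU (lam q) k (1, 0))
| tree_branch k v : (1 <= k <= q - 1)%nat -> tree v -> tree (iterU (lam q) k (Sv v)).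

Lemma tree_quadrant_Qq v : tree v -> 0 <= fst v * snd v /\ 1 <= Qq q v.
Proof.
  induction 1 as [k Hk | k v Hk _ [IH1 IH2]].
  - rewrite Qq_iterU, iterU_e1. cbn [fst snd].
    pose proof (cheb_lam_ge_0 (S k) ltac:(lia)). pose proof (cheb_lam_ge_0 k ltac:(lia)).
    split; [apply Rmult_le_pos; assumption | unfold Qq; simpl; lra].
  - split.
    + apply iterU_quadrant; [exact Hk|]. destruct v as [x y]; unfold Sv; simpl in *. nra.
    + rewrite Qq_iterU, Qq_Sv. pose proof lam_bounds. nra.
Qed.

Definition sym_tree (v : vec2) : Prop := exists n y, tree y /\ v = Nat.iter n Sv y.

Lemma sym_tree_Qq v : sym_tree v -> 1 <= Qq q v.
Proof.
  intros [n [y [Hy ->]]]. destruct (tree_quadrant_Qq y Hy) as [H1 H2].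
  enough (1 <= Qq q (Nat.iter n Sv y) /\ 1 <= Qq q (Sv (Nat.iter n Sv y))) by tauto.
  induction n as [|n IH].
  - simpl. rewrite Qq_Sv. pose proof lam_bounds. nra.
  - split; [apply IH|]. change (Nat.iter (S n) Sv y) with (Sv (Nat.iter n Sv y)).
    replace (Qq q (Sv (Sv (Nat.iter n Sv y)))) with (Qq q (Nat.iter n Sv y))
      by (destruct (Nat.iter n Sv y); unfold Qq, Sv; simpl; ring).
    apply IH.
Qed.

Lemma sym_tree_Sv v : sym_tree v -> sym_tree (Sv v).
Proof. intros [n [y [Hy ->]]]. exists (S n), y. auto. Qed.

Lemma tree_sym_tree v : tree v -> sym_tree v.
Proof. intro Hv. exists O, v. auto. Qed.

Lemma tree_Uv v : tree v -> sym_tree (Uv (lam q) v).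
Proof.
  destruct 1 as [k Hk | k v Hk Hv].
  - change (Uv (lam q) (iterU (lam q) k (1, 0))) with (iterU (lam q) (S k) (1, 0)).
    destruct (Nat.eq_dec k (q - 1)) as [E | E].
    + replace (S k) with q by lia. rewrite iterU_lam_q.
      exists 2%nat, (iterU (lam q) 0 (1, 0)). split; [apply tree_root; lia | reflexivity].
    + apply tree_sym_tree, tree_root. lia.
  - change (Uv (lam q) (iterU (lam q) k (Sv v))) with (iterU (lam q) (S k) (Sv v)).
    destruct (Nat.eq_dec k (q - 1)) as [E | E].
    + replace (S k) with q by lia. rewrite iterU_lam_q. exists 3%nat, v. auto.
    + apply tree_sym_tree, tree_branch; [lia | exact Hv].
Qed.

Lemma sym_tree_Uv v : sym_tree v -> sym_tree (Uv (lam q) v).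
Proof.
  intros [n [y [Hy ->]]].
  enough (sym_tree (Uv (lam q) (Nat.iter n Sv y)) /\
          sym_tree (Uv (lam q) (Nat.iter (S n) Sv y))) by tauto.
  induction n as [|n IH].
  - split; [apply tree_Uv, Hy|].
    apply tree_sym_tree. apply (tree_branch 1); [lia | exact Hy].
  - split; [apply IH|].
    change (Nat.iter (S (S n)) Sv y) with (Sv (Sv (Nat.iter n Sv y))).
    rewrite Uv_Sv_Sv. apply sym_tree_Sv, sym_tree_Sv, IH.
Qed.

Lemma sym_tree_iterU n v : sym_tree v -> sym_tree (iterU (lam q) n v).
Proof. intro Hv. induction n as [|n IH]; [exact Hv | apply sym_tree_Uv, IH]. Qed.

Lemma Lambda_sym_tree v : Lambda q v -> sym_tree v.
Proof.
  intros [A [HA ->]]. induction HA; rewrite ?mapply_mmul.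
  - rewrite mapply_mid. apply tree_sym_tree, (tree_root 0). lia.
  - replace (mapply matS _) with (Sv (mapply A (1, 0))) by (destruct (mapply A (1, 0));
      unfold mapply, Sv; simpl; f_equal; ring).
    apply sym_tree_Sv, IHHA.
  - replace (mapply matSinv _) with (Sv (Sv (Sv (mapply A (1, 0)))))
      by (destruct (mapply A (1, 0)); unfold mapply, Sv; simpl; f_equal; ring).
    apply sym_tree_Sv, sym_tree_Sv, sym_tree_Sv, IHHA.
  - replace (mapply (matT q) _) with (Uv (lam q) (Sv (Sv (Sv (mapply A (1, 0))))))
      by (destruct (mapply A (1, 0)); unfold mapply, Uv, Sv; simpl; f_equal; ring).
    apply sym_tree_Uv, sym_tree_Sv, sym_tree_Sv, sym_tree_Sv, IHHA.
  - rewrite mapply_matTinv.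
    apply sym_tree_Sv, sym_tree_Sv, sym_tree_Sv, sym_tree_iterU, IHHA.
Qed.

Lemma Qq_Lambda_ge_1 v : Lambda q v -> 1 <= Qq q v.
Proof. intro Hv. apply sym_tree_Qq, Lambda_sym_tree, Hv. Qed.

Lemma Lambda_Sv v : Lambda q v -> Lambda q (Sv v).
Proof.
  intro Hv. replace (Sv v) with (mapply matS v)
    by (destruct v; unfold mapply, Sv; simpl; f_equal; ring).
  apply orbit_act; [apply Gq_matS | exact Hv].
Qed.

Lemma Lambda_height_1 x : Lambda q (x, 1) -> Rabs x <= lam q / 2 -> x = 0.
Proof.
  intros Hx Hsmall.
  pose proof (Qq_Lambda_ge_1 _ Hx) as Q1.
  pose proof (Qq_Lambda_ge_1 _ (Lambda_Sv _ Hx)) as Q2.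
  unfold Qq, Sv in Q1, Q2; simpl in Q1, Q2. pose proof lam_bounds.
  destruct (Rle_dec 0 x).
  - rewrite Rabs_right in Hsmall by lra. nra.
  - rewrite Rabs_left in Hsmall by lra. nra.
Qed.

Lemma unimodular_pair_reduction u0 u1 : Lambda q u0 -> Lambda q u1 -> wedge u0 u1 = 1 ->
  exists A, Gq q A /\ mapply A u0 = (1, 0) /\ mapply A u1 = (0, 1).
Proof.
  intros [B [HB Hu0]] Hu1 Hw.
  pose proof (Gq_det B HB) as HdB.
  set (v := mapply (madj B) u1).
  assert (Hv : Lambda q v) by (apply orbit_act; [apply Gq_madj|]; assumption).
  assert (Hv1 : snd v = 1).
  { transitivity (wedge (mapply (madj B) u0) v).
    - rewrite Hu0, mapply_madj_l by exact HdB. unfold wedge; simpl. ring.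
    - unfold v. rewrite wedge_mapply, det_madj, HdB, Hw. ring. }
  destruct v as [x y] eqn:Ev. simpl in Hv1. subst y.
  destruct (translate_close (lam q) x 1 0 ltac:(apply lam_bounds) ltac:(lra)) as [k Hk].
  rewrite Rabs_R1, !Rmult_1_r, Rminus_0_r in Hk.
  assert (Hx : x + IZR k * lam q * 1 = 0).
  { rewrite Rmult_1_r. apply Lambda_height_1; [|exact Hk].
    rewrite <- (Rmult_1_r (IZR k * lam q)), <- mapply_matTz.
    apply orbit_act; [apply Gq_matTz | exact Hv]. }
  exists (mmul (matTz k) (madj B)). split; [|split].
  - apply Gq_mul; [apply Gq_matTz | apply Gq_madj, HB].
  - rewrite mapply_mmul, Hu0, mapply_madj_l, mapply_matTz by exact HdB. f_equal; ring.
  - rewrite mapply_mmul. fold v. rewrite Ev, mapply_matTz, Hx. reflexivity.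
Qed.

Lemma cols_unimodular_Gq u0 u1 : Lambda q u0 -> Lambda q u1 -> wedge u0 u1 = 1 ->
  Gq q (cols u0 u1).
Proof.
  intros H0 H1 Hw. destruct (unimodular_pair_reduction u0 u1 H0 H1 Hw) as [A [HA [A0 A1]]].
  rewrite <- (mapply_madj_l A u0), <- (mapply_madj_l A u1), A0, A1, cols_columns
    by exact (Gq_det A HA).
  apply Gq_madj, HA.
Qed.

Lemma w_cheb i : w q i = (cheb (lam q) (S i), cheb (lam q) i).
Proof.
  rewrite <- iterU_e1. unfold w. induction i as [|i IH]; [apply mapply_mid|].
  simpl mpow. rewrite mapply_mmul, IH.
  change (iterU (lam q) (S i) (1, 0)) with (Uv (lam q) (iterU (lam q) i (1, 0))).
  destruct (iterU (lam q) i (1, 0)). unfold mapply, matU, mmul, matT, matS, Uv; simpl.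
  f_equal; ring.
Qed.

Definition approaches_zero (u : vec2) : Prop :=
  forall eps, 0 < eps -> exists v, orbit q u v /\ snd v <> 0 /\ norm2 v < eps.

Lemma orbit_descent u x y s : orbit q u (x, y) -> y <> 0 ->
  Rabs x <= s -> Rabs y <= lam q / 2 * s ->
  (exists a, orbit q u (a, 0)) \/
  exists x' y', orbit q u (x', y') /\ y' <> 0 /\
    Rabs x' <= lam q / 2 * s /\ Rabs y' <= lam q / 2 * (lam q / 2 * s).
Proof.
  intros Hu Hy Hx Hys. pose proof lam_bounds.
  destruct (translate_close (lam q) x y 0 ltac:(lra) Hy) as [k Hk].
  rewrite Rminus_0_r in Hk. set (z := x + IZR k * lam q * y) in Hk.
  assert (Hz : orbit q u (z, y))
    by (unfold z; rewrite <- mapply_matTz; apply orbit_act; [apply Gq_matTz | exact Hu]).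
  assert (HS : orbit q u (- y, z)).
  { replace (- y, z) with (mapply matS (z, y)) by (unfold mapply; simpl; f_equal; ring).
    apply orbit_act; [apply Gq_matS | exact Hz]. }
  destruct (Req_dec z 0) as [Hz0 | Hz0].
  - left. exists (- y). rewrite <- Hz0. exact HS.
  - right. exists (- y), z. rewrite Rabs_Ropp. repeat split; try assumption.
    apply Rle_trans with (lam q / 2 * Rabs y); [exact Hk|].
    apply Rmult_le_compat_l; lra.
Qed.

Lemma orbit_descent_iter u x y s : ~ (exists a, orbit q u (a, 0)) ->
  orbit q u (x, y) -> y <> 0 -> Rabs x <= s -> Rabs y <= lam q / 2 * s ->
  forall n, exists x' y', orbit q u (x', y') /\ y' <> 0 /\
    Rabs x' <= (lam q / 2) ^ n * s /\ Rabs y' <= lam q / 2 * ((lam q / 2) ^ n * s).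
Proof.
  intros Hax Hxy Hy Hx Hys n. induction n as [|n [x' [y' [Hxy' [Hy' [Hx' Hys']]]]]].
  - exists x, y. rewrite pow_O, Rmult_1_l. auto.
  - destruct (orbit_descent _ _ _ _ Hxy' Hy' Hx' Hys') as [Ha | [x'' [y'' H'']]];
      [contradiction | exists x'', y''; rewrite <- tech_pow_Rmult, Rmult_assoc; exact H''].
Qed.

Lemma geometric_small r s e : 0 <= r < 1 -> 0 <= s -> 0 < e -> exists N, r ^ N * s < e.
Proof.
  intros Hr Hs He.
  destruct (pow_lt_1_zero r ltac:(rewrite Rabs_right; lra) (e / (s + 1))
              ltac:(apply Rdiv_lt_0_compat; lra)) as [N HN].
  exists N. specialize (HN N (le_n N)). rewrite Rabs_right in HN by (apply Rle_ge, pow_le; lra).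
  pose proof (pow_le r N ltac:(lra)).
  apply Rle_lt_trans with (r ^ N * (s + 1)); [nra|].
  apply (Rmult_lt_reg_r (/ (s + 1))); [apply Rinv_0_lt_compat; lra|].
  rewrite Rmult_assoc, Rinv_r, Rmult_1_r by lra. exact HN.
Qed.

Lemma orbit_axis_or_approaches_zero u : (exists a, orbit q u (a, 0)) \/ approaches_zero u.
Proof.
  destruct (classic (exists a, orbit q u (a, 0))) as [Hax | Hax]; [left; exact Hax | right].
  pose proof lam_bounds. set (r := lam q / 2) in *.
  destruct u as [ux uy].
  assert (Huy : uy <> 0) by (intros ->; apply Hax; exists ux; apply orbit_refl).
  assert (Huyr : 0 <= Rabs uy / r)
    by (apply Rmult_le_pos; [apply Rabs_pos | left; apply Rinv_0_lt_compat; unfold r; lra]).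
  set (s0 := Rabs ux + Rabs uy / r).
  pose proof (Rabs_pos ux).
  assert (Hys0 : Rabs uy <= r * s0).
  { replace (r * s0) with (r * Rabs ux + Rabs uy) by (unfold s0, r; field; lra).
    assert (0 <= r * Rabs ux) by (apply Rmult_le_pos; unfold r; lra). lra. }
  intros eps Heps. set (e := Rmin 1 (eps / 2)).
  assert (He : 0 < e /\ e <= 1 /\ e <= eps / 2)
    by (unfold e; repeat split; [apply Rmin_glb_lt; lra | apply Rmin_l | apply Rmin_r]).
  destruct (geometric_small r s0 e ltac:(unfold r; lra) ltac:(unfold s0; lra) ltac:(lra))
    as [N HN].
  destruct (orbit_descent_iter _ ux uy s0 Hax (orbit_refl _) Huy ltac:(unfold s0; lra) Hys0 N)
    as [x [y [Hxy [Hy [Hx Hys]]]]].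
  fold r in Hx, Hys.
  exists (x, y). repeat split; [exact Hxy | exact Hy|]. unfold norm2; cbn [fst snd].
  assert (Rabs y < e).
  { assert (0 <= r ^ N * s0)
      by (apply Rmult_le_pos; [apply pow_le; unfold r; lra | unfold s0; lra]).
    apply Rle_lt_trans with (r ^ N * s0); [|exact HN].
    apply Rle_trans with (r * (r ^ N * s0)); [exact Hys|].
    rewrite <- (Rmult_1_l (r ^ N * s0)) at 2.
    apply Rmult_le_compat_r; [assumption | unfold r; lra]. }
  pose proof (sq_lt_of_abs_lt x e ltac:(lra) ltac:(lra)).
  pose proof (sq_lt_of_abs_lt y e ltac:(lra) ltac:(lra)). lra.
Qed.

Lemma Gq_columns M : Gq q M ->
  Lambda q (mapply M (1, 0)) /\ Lambda q (mapply M (0, 1)) /\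
  wedge (mapply M (1, 0)) (mapply M (0, 1)) = 1.
Proof.
  intro HM. split; [|split].
  - exists M. auto.
  - exists (mmul M matS). split; [apply Gq_mul; [exact HM | apply Gq_matS]|].
    rewrite mapply_mmul. f_equal. unfold mapply; simpl; f_equal; ring.
  - rewrite wedge_mapply, (Gq_det M HM). unfold wedge; simpl; ring.
Qed.

Lemma Lambda_lines_dense p eps : 0 < eps ->
  exists c t, Lambda q c /\ dist2 p (scale t c) < eps.
Proof.
  intro Heps.
  pose proof (norm2_ge_0 p).
  destruct (Req_dec (norm2 p) 0) as [Hp | Hp].
  - exists (1, 0), 0. split; [apply orbit_refl|].
    replace (dist2 p (scale 0 (1, 0))) with (norm2 p)
      by (unfold dist2, norm2, scale; simpl; ring). lra.
  - destruct (orbit_axis_or_approaches_zero p) as [[a Ha] | Hz].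
    + apply orbit_sym, orbit_axis in Ha. destruct Ha as [z [Hz ->]].
      exists z, a. split; [exact Hz|]. unfold dist2. simpl. lra.
    + set (delta := Rmin 1 (eps * norm2 p / 4)).
      assert (Hdelta : 0 < delta /\ delta <= 1 /\ delta <= eps * norm2 p / 4)
        by (unfold delta; repeat split;
            [apply Rmin_glb_lt; [lra | apply Rmult_lt_0_compat; [nra | lra]]
            | apply Rmin_l | apply Rmin_r]).
      destruct (Hz delta ltac:(lra)) as [[a b] [[A [HA Hv]] [_ Hab]]].
      assert (Hpv : p = mapply (madj A) (a, b))
        by (rewrite Hv, mapply_madj_l; [reflexivity | apply Gq_det, HA]).
      destruct (Gq_columns (madj A) (Gq_madj A HA)) as [Hc1 [Hc2 Hw]].
      destruct (near_column_line _ _ a b Hw) as [c [t [Hc Hd]]].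
      rewrite cols_columns, <- Hpv in Hd.
      exists c, t. split; [destruct Hc as [-> | ->]; assumption|].
      assert (Hn : 0 < norm2 p) by lra.
      assert (H4 : 4 * a ^ 2 * b ^ 2 < eps * norm2 p).
      { unfold norm2 in Hab; cbn [fst snd] in Hab.
        pose proof (four_mul_sq_lt a b delta Hab ltac:(lra)). lra. }
      apply (Rmult_lt_reg_r (norm2 p)); lra.
Qed.

Lemma orbit_dense u : approaches_zero u ->
  forall p eps, 0 < eps -> exists v, orbit q u v /\ dist2 p v < eps.
Proof.
  intros Hu p eps Heps.
  destruct (Lambda_lines_dense p (eps / 4) ltac:(lra)) as [c [t [[C [HC ->]] Hc]]].
  rewrite <- mapply_axis in Hc.
  set (K := frob2 C).
  assert (HK : 0 <= K) by (unfold K, frob2; pose proof (pow2_ge_0 (m11 C));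
    pose proof (pow2_ge_0 (m12 C)); pose proof (pow2_ge_0 (m21 C));
    pose proof (pow2_ge_0 (m22 C)); lra).
  set (eta := eps / (4 * (K + 1))).
  assert (Heta : 0 < eta) by (unfold eta; apply Rdiv_lt_0_compat; lra).
  assert (HKeta : K * eta <= eps / 4).
  { unfold eta. apply (Rmult_le_reg_r (4 * (K + 1))); [lra|].
    field_simplify; [nra | lra]. }
  destruct (Hu (eta / 2) ltac:(lra)) as [[x y] [Hv [Hy Hxy]]].
  unfold norm2 in Hxy; simpl in Hy, Hxy.
  pose proof lam_bounds.
  destruct (translate_close (lam q) x y t ltac:(lra) Hy) as [k Hk].
  exists (mapply C (mapply (matTz k) (x, y))).
  split; [apply orbit_act; [exact HC | apply orbit_act; [apply Gq_matTz | exact Hv]]|].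
  rewrite mapply_matTz.
  assert (Hd : dist2 (t, 0) (x + IZR k * lam q * y, y) < eta).
  { unfold dist2; simpl.
    assert (Rabs (x + IZR k * lam q * y - t) <= Rabs y)
      by (pose proof (Rabs_pos y); nra).
    assert ((x + IZR k * lam q * y - t) ^ 2 <= y ^ 2)
      by (rewrite <- (pow2_abs (_ - t)), <- (pow2_abs y);
          apply pow_incr; split; [apply Rabs_pos | assumption]).
    pose proof (pow2_ge_0 x). lra. }
  pose proof (dist2_le_2 p (mapply C (t, 0)) (mapply C (x + IZR k * lam q * y, y))).
  pose proof (dist2_mapply_le C (t, 0) (x + IZR k * lam q * y, y)) as HC2.
  fold K in HC2.
  assert (K * dist2 (t, 0) (x + IZR k * lam q * y, y) <= K * eta)
    by (apply Rmult_le_compat_l; lra).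
  lra.
Qed.

Lemma discrete_orbit_axis u : discrete (orbit q u) -> exists a, orbit q u (a, 0).
Proof.
  intro Hd. destruct (orbit_axis_or_approaches_zero u) as [Hax | Hz]; [exact Hax | exfalso].
  destruct (Hd u (orbit_refl u)) as [eps [Heps Hiso]].
  set (h := eps / 2). set (p := (fst u + h, snd u)).
  assert (Hh : 0 < h ^ 2) by (unfold h; simpl; nra).
  assert (Hpu : dist2 p u = h ^ 2) by (unfold dist2, p; simpl; ring).
  destruct (orbit_dense u Hz p (h ^ 2 / 4) ltac:(lra)) as [v [Hv Hpv]].
  assert (Hvu : v = u).
  { apply Hiso; [exact Hv|]. fold (dist2 u v).
    pose proof (dist2_le_2 u p v).
    assert (dist2 u p = h ^ 2) by (rewrite <- Hpu; unfold dist2; ring).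
    assert (h ^ 2 * 4 = eps ^ 2) by (unfold h; field). lra. }
  subst v. lra.
Qed.

Lemma discrete_orbit_scaled_Lambda u : discrete (orbit q u) ->
  u = (0, 0) \/
  exists alpha, alpha <> 0 /\ forall v, orbit q u v <-> exists z, Lambda q z /\ v = scale alpha z.
Proof.
  intro Hd. destruct (discrete_orbit_axis u Hd) as [a Ha].
  destruct (Req_dec a 0) as [-> | Ha0].
  - left. apply orbit_sym in Ha. destruct Ha as [A [_ ->]]. apply mapply_zero.
  - right. exists a. split; [exact Ha0|]. intro v. rewrite <- orbit_axis. split.
    + apply orbit_trans, orbit_sym, Ha.
    + apply orbit_trans, Ha.
Qed.

Lemma wedge_w_succ i : wedge (w q i) (w q (i + 1)) = 1.
Proof.
  rewrite !w_cheb, Nat.add_1_r. unfold wedge; cbn [fst snd].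
  rewrite <- (cheb_cassini (lam q) i). ring.
Qed.

Lemma wedge_w_0_pred_q : wedge (w q 0) (w q (q - 1)) = 1.
Proof.
  rewrite !w_cheb. replace (S (q - 1)) with q by lia. unfold wedge; cbn [fst snd].
  rewrite cheb_lam_q, cheb_lam_pred_q. simpl. ring.
Qed.

End Hecke.

Theorem mainTheorem1 (q : nat) (hq : (3 <= q)%nat) :
  (forall u : vec2, discrete (orbit q u) ->
     u = (0, 0) \/
     exists alpha : R, alpha <> 0 /\
       forall v, orbit q u v <-> exists z, Lambda q z /\ v = scale alpha z)
  /\
  (forall v : vec2, Lambda q v -> ~ (Qq q v < 1))
  /\
  ((forall i : nat, (i <= q - 2)%nat -> wedge (w q i) (w q (i + 1)) = 1)
   /\ wedge (w q 0) (w q (q - 1)) = 1)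
  /\
  (forall u0 u1 : vec2, Lambda q u0 -> Lambda q u1 -> wedge u0 u1 = 1 ->
     (exists A, Gq q A /\ mapply A u0 = (1, 0) /\ mapply A u1 = (0, 1))
     /\ Gq q (cols u0 u1)).
Proof.
  split; [exact (discrete_orbit_scaled_Lambda q hq)|].
  split; [intros v Hv; apply Rle_not_lt, (Qq_Lambda_ge_1 q hq v Hv)|].
  split; [split; [intros i _; apply (wedge_w_succ q) | apply (wedge_w_0_pred_q q hq)]|].
  intros u0 u1 H0 H1 Hw. split.
  - exact (unimodular_pair_reduction q hq u0 u1 H0 H1 Hw).
  - exact (cols_unimodular_Gq q hq u0 u1 H0 H1 Hw).
Qed.
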